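(* Let $n,T\ge1$, $p\ge 1$, $\omega\ge 0$, and data $\dot x^j\in\mathbb{R}^n$, $z^j\in\mathbb{R}^{N_A}$, $v^j\in\mathbb{R}^{N_B}$, $j=0,\dots,T-1$, with $p=N_A+N_B$. Define $c_j:=-\omega I_n+\dot x^j(\dot x^j)^\top$, $b_j:=-\begin{bmatrix}z^j\\ v^j\end{bmatrix}(\dot x^j)^\top\in\mathbb{R}^{p\times n}$, $a_j:=\begin{bmatrix}z^j\\ v^j\end{bmatrix}\begin{bmatrix}z^j\\ v^j\end{bmatrix}^\top\in\mathbb{R}^{p\times p}$, and $Z_0:=[z^0\ \cdots\ z^{T-1}]$, $V_0:=[v^0\ \cdots\ v^{T-1}]$. If the matrix $\begin{bmatrix}Z_0\\ V_0\end{bmatrix}\in\mathbb{R}^{p\times T}$ has full row rank, then there exist a symmetric matrix $A_{\mathrm{i}}\in\mathbb{R}^{p\times p}$, a matrix $B_{\mathrm{i}}\in\mathbb{R}^{p\times n}$ and scalars $\tau_0,\dots,\tau_{T-1}$ satisfying $$\begin{bmatrix}-I-\sum_{j=0}^{T-1}\tau_jc_j & B_{\mathrm{i}}^\top-\sum_{j=0}^{T-1}\tau_jb_j^\top & B_{\mathrm{i}}^\top\\ B_{\mathrm{i}}-\sum_{j=0}^{T-1}\tau_jb_j & A_{\mathrm{i}}-\sum_{j=0}^{T-1}\tau_ja_j & 0\\ B_{\mathrm{i}} & 0 & -A_{\mathrm{i}}\end{bmatrix}\preceq 0,\qquad A_{\mathrm{i}}\succ 0,\qquad \tau_j\ge 0\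 (j=0,\dots,T-1),$$ i.e., the optimization program ''minimize $-\log\det A_{\mathrm{i}}$ subject to these constraints'' is feasible.
   Context: $\succeq,\preceq$ denote the Loewner order on symmetric matrices; $I$ denotes identity matrices of appropriate size. *)

From mathcomp Require Import all_boot all_order all_algebra.
Set Implicit Arguments. Unset Strict Implicit. Unset Printing Implicit Defensive.
Import Order.TTheory GRing.Theory Num.Theory.
Local Open Scope ring_scope.

Definition nsd (R : realFieldType) (k : nat) (M : 'M[R]_k) : Prop :=
  M^T = M /\ forall x : 'cV[R]_k, (x^T *m M *m x) 0 0 <= 0.

Definition pd (R : realFieldType) (k : nat) (M : 'M[R]_k) : Prop :=
  M^T = M /\ forall x : 'cV[R]_k, x != 0 -> 0 < (x^T *m M *m x) 0 0.

Definition block3 (R : realFieldType) (n p : nat)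
  (M11 : 'M[R]_n) (M12 : 'M[R]_(n, p)) (M13 : 'M[R]_(n, p))
  (M21 : 'M[R]_(p, n)) (M22 : 'M[R]_p) (M23 : 'M[R]_p)
  (M31 : 'M[R]_(p, n)) (M32 : 'M[R]_p) (M33 : 'M[R]_p) : 'M[R]_(n + p + p) :=
  col_mx (col_mx (row_mx (row_mx M11 M12) M13)
                 (row_mx (row_mx M21 M22) M23))
         (row_mx (row_mx M31 M32) M33).

Definition zv (R : realFieldType) (NA NB : nat)
  (z : 'cV[R]_NA) (v : 'cV[R]_NB) : 'cV[R]_(NA + NB) := col_mx z v.

Definition c_j (R : realFieldType) (n : nat) (omega : R) (xd : 'cV[R]_n) : 'M[R]_n :=
  - (omega%:M) + xd *m xd^T.
Definition b_j (R : realFieldType) (n p : nat) (w : 'cV[R]_p) (xd : 'cV[R]_n)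
  : 'M[R]_(p, n) := - (w *m xd^T).
Definition a_j (R : realFieldType) (p : nat) (w : 'cV[R]_p) : 'M[R]_p := w *m w^T.

Definition datamx (R : realFieldType) (k T : nat) (z : 'I_T -> 'cV[R]_k)
  : 'M[R]_(k, T) := \matrix_(i < k, j < T) z j i 0.

From mathcomp Require Import all_boot all_order all_algebra.
From mathcomp Require Import ring lra.
Import Order.TTheory GRing.Theory Num.Theory.
Set Implicit Arguments. Unset Strict Implicit. Unset Printing Implicit Defensive.
Local Open Scope ring_scope.

(* Take [B_i = 0], every [tau_j] equal to [t := 1 / (1 + sum_j (omega + |xd^j|^2))]
   and [A_i := (t/2) sum_j w_j w_j^T = (t/2) W W^T] with [w_j = [z^j; v^j]], which
   is positive definite because [W] has full row rank.  At [(y; u; s)] the block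
   matrix has quadratic form [-|y|^2 - (t/2) |W^T s|^2] plus, for each [j],
   [t (omega |y|^2 - (xd^j.y)^2 + 2 (w_j.u) (xd^j.y) - (w_j.u)^2 / 2)]; by
   Cauchy-Schwarz the latter is at most [t (omega + |xd^j|^2) |y|^2], and the
   choice of [t] makes these terms sum to at most [|y|^2]. *)

Section InnerProduct.
Variable R : realFieldType.

Definition vdot k (a b : 'cV[R]_k) : R := (a^T *m b) 0 0.

Definition bform k l (y : 'cV[R]_k) (M : 'M[R]_(k, l)) (u : 'cV[R]_l) : R :=
  (y^T *m M *m u) 0 0.

Lemma vdotE k (a b : 'cV[R]_k) : vdot a b = \sum_i a i 0 * b i 0.
Proof. by rewrite /vdot mxE; apply: eq_bigr => i _; rewrite mxE. Qed.

Lemma vdotC k (a b : 'cV[R]_k) : vdot a b = vdot b a.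
Proof. by rewrite !vdotE; apply: eq_bigr => i _; rewrite mulrC. Qed.

Lemma vdot0l k (b : 'cV[R]_k) : vdot 0 b = 0.
Proof. by rewrite /vdot trmx0 mul0mx mxE. Qed.

Lemma vdotBr k (a b c : 'cV[R]_k) : vdot a (b - c) = vdot a b - vdot a c.
Proof. by rewrite /vdot mulmxBr !mxE. Qed.

Lemma vdotZr k (a b : 'cV[R]_k) r : vdot a (r *: b) = r * vdot a b.
Proof. by rewrite /vdot -scalemxAr mxE. Qed.

Lemma vdotBl k (a b c : 'cV[R]_k) : vdot (a - b) c = vdot a c - vdot b c.
Proof. by rewrite vdotC vdotBr !(vdotC c). Qed.

Lemma vdotZl k (a b : 'cV[R]_k) r : vdot (r *: a) b = r * vdot a b.
Proof. by rewrite vdotC vdotZr vdotC. Qed.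

Lemma vdot_ge0 k (a : 'cV[R]_k) : 0 <= vdot a a.
Proof. by rewrite vdotE; apply: sumr_ge0 => i _; rewrite -expr2 sqr_ge0. Qed.

Lemma vdot_gt0 k (a : 'cV[R]_k) : a != 0 -> 0 < vdot a a.
Proof.
apply: contraNT; rewrite lt0r vdot_ge0 andbT negbK vdotE => /eqP a0.
have sq_ge0 i : true -> 0 <= a i 0 * a i 0 by rewrite -expr2 sqr_ge0.
apply/eqP/matrixP => i j; rewrite (ord1 j) mxE.
have /eqP := psumr_eq0P sq_ge0 a0 (i := i) isT.
by rewrite mulf_eq0 orbb => /eqP.
Qed.

(* Expanding [0 <= vdot c c] for [c = |a|^2 b - (a.b) a] gives
   [|a|^2 (|a|^2 |b|^2 - (a.b)^2) >= 0]. *)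
Lemma vdot_CauchySchwarz k (a b : 'cV[R]_k) :
  vdot a b ^+ 2 <= vdot a a * vdot b b.
Proof.
have [->|a0] := eqVneq a 0; first by rewrite !vdot0l expr0n mul0r.
have aa_gt0 := vdot_gt0 a0.
have := vdot_ge0 (vdot a a *: b - vdot a b *: a).
rewrite !(vdotBl, vdotBr, vdotZl, vdotZr) (vdotC b a).
by move: (vdot a a) (vdot a b) (vdot b b) aa_gt0 => l m q l_gt0 /=; nra.
Qed.

Lemma bform1 k (y u : 'cV[R]_k) : bform y 1%:M u = vdot y u.
Proof. by rewrite /bform mulmx1. Qed.

Lemma bform0 k l (y : 'cV[R]_k) (u : 'cV[R]_l) : bform y 0 u = 0.
Proof. by rewrite /bform mulmx0 mul0mx mxE. Qed.

Lemma bformD k l y (M1 M2 : 'M[R]_(k, l)) u :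
  bform y (M1 + M2) u = bform y M1 u + bform y M2 u.
Proof. by rewrite /bform mulmxDr mulmxDl !mxE. Qed.

Lemma bformN k l y (M : 'M[R]_(k, l)) u : bform y (- M) u = - bform y M u.
Proof. by rewrite /bform mulmxN mulNmx !mxE. Qed.

Lemma bformB k l y (M1 M2 : 'M[R]_(k, l)) u :
  bform y (M1 - M2) u = bform y M1 u - bform y M2 u.
Proof. by rewrite bformD bformN. Qed.

Lemma bformZ k l y r (M : 'M[R]_(k, l)) u : bform y (r *: M) u = r * bform y M u.
Proof. by rewrite /bform -scalemxAr -scalemxAl mxE. Qed.

Lemma bform_sum k l T (M : 'I_T -> 'M[R]_(k, l)) y u :
  bform y (\sum_j M j) u = \sum_j bform y (M j) u.
Proof. by rewrite /bform mulmx_sumr mulmx_suml summxE. Qed.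

Lemma bform_tr k l y (M : 'M[R]_(k, l)) u : bform y M^T u = bform u M y.
Proof.
rewrite /bform; have -> : y^T *m M^T *m u = (u^T *m M *m y)^T.
  by rewrite !trmx_mul !trmxK mulmxA.
by rewrite mxE.
Qed.

Lemma bform_outer k l (y a : 'cV[R]_k) (b u : 'cV[R]_l) :
  bform y (a *m b^T) u = vdot y a * vdot b u.
Proof. by rewrite /bform /vdot !mulmxA -(mulmxA (y^T *m a)) [in LHS]mxE big_ord1. Qed.

End InnerProduct.

Lemma row_col_mxE (R : Type) m1 m2 n1 n2 (A : 'M[R]_(m1, n1)) (B : 'M[R]_(m2, n1))
    (C : 'M[R]_(m1, n2)) (D : 'M[R]_(m2, n2)) :
  row_mx (col_mx A B) (col_mx C D) = col_mx (row_mx A C) (row_mx B D).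
Proof. by rewrite -block_mxEh block_mxEv. Qed.

Lemma tr_block3 (R : realFieldType) n p M11 M12 M13 M21 M22 M23 M31 M32 M33 :
  (@block3 R n p M11 M12 M13 M21 M22 M23 M31 M32 M33)^T =
  block3 M11^T M21^T M31^T M12^T M22^T M32^T M13^T M23^T M33^T.
Proof. by rewrite /block3 !tr_col_mx !tr_row_mx !row_col_mxE. Qed.

Lemma bform_block3 (R : realFieldType) n p M11 M12 M13 M21 M22 M23 M31 M32 M33
    (y : 'cV_n) (u s : 'cV_p) (x := col_mx (col_mx y u) s) :
  bform x (@block3 R n p M11 M12 M13 M21 M22 M23 M31 M32 M33) x =
  bform y M11 y + bform y M12 u + bform y M13 s
  + bform u M21 y + bform u M22 u + bform u M23 s
  + bform s M31 y + bform s M32 u + bform s M33 s.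
Proof.
rewrite /x /bform /block3 !tr_col_mx -mulmxA !mul_col_mx !mul_row_col.
by rewrite !mulmxDr !mulmxA !mxE; ring.
Qed.

(* The gap is [(c N - a^2) + 2 (a - b/2)^2]. *)
Lemma cross_term_le (R : realFieldType) (omega c N a b : R) :
  a ^+ 2 <= c * N ->
  omega * N - a ^+ 2 + 2 * (b * a) - b ^+ 2 / 2 <= (omega + c) * N.
Proof. by move=> le_a; have := sqr_ge0 (a - b / 2); nra. Qed.

Section Certificate.
Variables (R : realFieldType) (n p T : nat) (omega : R).
Variables (x : 'I_T -> 'cV[R]_n) (w : 'I_T -> 'cV[R]_p).
Implicit Types (y : 'cV[R]_n) (u : 'cV[R]_p).

Definition data_bound : R := \sum_j (omega + vdot (x j) (x j)).

Definition gram : 'M[R]_p := \sum_j a_j (w j).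

Lemma tr_gram : gram^T = gram.
Proof.
by rewrite /gram linear_sum /=; apply: eq_bigr => j _; rewrite /a_j trmx_mul trmxK.
Qed.

Lemma tr_sum_c_j : (\sum_j c_j omega (x j))^T = \sum_j c_j omega (x j).
Proof.
rewrite linear_sum /=; apply: eq_bigr => j _.
by rewrite /c_j linearD /= linearN /= tr_scalar_mx trmx_mul trmxK.
Qed.

Lemma bform_sum_c_j y :
  bform y (\sum_j c_j omega (x j)) y = - \sum_j (omega * vdot y y - vdot (x j) y ^+ 2).
Proof.
rewrite bform_sum -sumrN; apply: eq_bigr => j _.
by rewrite /c_j bformD bformN -scalemx1 bformZ bform1 bform_outer vdotC expr2 opprB addrC.
Qed.

Lemma bform_sum_b_j u y :
  bform u (\sum_j b_j (w j) (x j)) y = - \sum_j vdot (w j) u * vdot (x j) y.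
Proof.
rewrite bform_sum -sumrN; apply: eq_bigr => j _.
by rewrite /b_j bformN bform_outer vdotC.
Qed.

Lemma bform_gram u : bform u gram u = \sum_j vdot (w j) u ^+ 2.
Proof. by rewrite bform_sum; apply: eq_bigr => j _; rewrite bform_outer vdotC expr2. Qed.

Lemma bform_gram_ge0 u : 0 <= bform u gram u.
Proof. by rewrite bform_gram; apply: sumr_ge0 => j _; apply: sqr_ge0. Qed.

Lemma cross_sum_le y u :
  \sum_j (omega * vdot y y - vdot (x j) y ^+ 2) + 2 * \sum_j vdot (w j) u * vdot (x j) y
  - (\sum_j vdot (w j) u ^+ 2) / 2 <= data_bound * vdot y y.
Proof.
rewrite /data_bound mulr_suml mulr_sumr mulr_suml -sumrN -!big_split /=.
apply: ler_sum => j _; apply: cross_term_le.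
exact: vdot_CauchySchwarz.
Qed.

Lemma nsd_certificate t : 0 <= t -> t * data_bound <= 1 ->
  nsd (block3
    (- 1%:M - \sum_j t *: c_j omega (x j))
    (- \sum_j t *: (b_j (w j) (x j))^T) 0
    (- \sum_j t *: b_j (w j) (x j)) ((t / 2) *: gram - \sum_j t *: a_j (w j)) 0
    0 0 (- ((t / 2) *: gram))).
Proof.
move=> t_ge0 t_le; rewrite -!scaler_sumr -/gram.
have -> : \sum_j (b_j (w j) (x j))^T = (\sum_j b_j (w j) (x j))^T by rewrite linear_sum.
split.
  rewrite tr_block3 !(linearB, linearN, linearZ) /= !trmxK !trmx0 tr_scalar_mx.
  by rewrite !tr_gram tr_sum_c_j.
move=> X; rewrite -[X]vsubmxK -[usubmx X]vsubmxK.
set y := usubmx _; set u := dsubmx (usubmx X); set s := dsubmx X.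
rewrite -[(_ *m _ *m _) 0 0]/(bform _ _ _) bform_block3.
rewrite !(bformB, bformN, bformZ, bform0, bform1, bform_tr).
rewrite bform_sum_c_j bform_sum_b_j [bform u _ _]bform_gram.
have := cross_sum_le y u; have := bform_gram_ge0 s; have := vdot_ge0 y.
set N := vdot y y; set S1 := \sum_j _; set S2 := \sum_j _; set S3 := \sum_j _.
move=> N_ge0 Gs_ge0 le_S.
have := ler_wpM2l t_ge0 le_S; have := ler_wpM2r N_ge0 t_le.
have := mulr_ge0 t_ge0 Gs_ge0; lra.
Qed.

End Certificate.

Section GramMatrix.
Variable R : realFieldType.

Lemma sum_a_j_col p T (W : 'M[R]_(p, T)) : \sum_j a_j (col j W) = W *m W^T.
Proof.
apply/matrixP => i k; rewrite summxE !mxE; apply: eq_bigr => j _.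
by rewrite /a_j !mxE big_ord1 !mxE.
Qed.

Lemma pd_gram p T (W : 'M[R]_(p, T)) : row_free W -> pd (W *m W^T).
Proof.
move=> freeW; split=> [|u u_neq0]; first by rewrite trmx_mul trmxK.
have -> : (u^T *m (W *m W^T) *m u) 0 0 = vdot (W^T *m u) (W^T *m u).
  by rewrite /vdot trmx_mul trmxK !mulmxA.
apply: vdot_gt0; rewrite -trmx_eq0 trmx_mul trmxK mulmx_free_eq0 //.
by rewrite trmx_eq0.
Qed.

Lemma pdZ k c (M : 'M[R]_k) : 0 < c -> pd M -> pd (c *: M).
Proof.
move=> c_gt0 [symM posM]; split=> [|u u_neq0]; first by rewrite linearZ /= symM.
by rewrite -scalemxAr -scalemxAl mxE mulr_gt0 // posM.
Qed.

End GramMatrix.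

Lemma col_datamx (R : realFieldType) NA NB T (z : 'I_T -> 'cV[R]_NA)
    (v : 'I_T -> 'cV[R]_NB) j :
  col j (col_mx (datamx z) (datamx v)) = zv (z j) (v j).
Proof.
by rewrite col_col_mx; congr col_mx; apply/matrixP => i k; rewrite !mxE (ord1 k).
Qed.

Lemma gram_datamx (R : realFieldType) NA NB T (z : 'I_T -> 'cV[R]_NA)
    (v : 'I_T -> 'cV[R]_NB) (W := col_mx (datamx z) (datamx v)) :
  gram (fun j => zv (z j) (v j)) = W *m W^T.
Proof. by rewrite -sum_a_j_col; apply: eq_bigr => j _; rewrite col_datamx. Qed.

Lemma data_bound_ge0 (R : realFieldType) n T (omega : R) (x : 'I_T -> 'cV[R]_n) :
  0 <= omega -> 0 <= data_bound omega x.
Proof. by move=> omega_ge0; apply: sumr_ge0 => j _; rewrite addr_ge0 ?vdot_ge0. Qed.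

Theorem mainTheorem2 (R : realFieldType) (n T NA NB : nat) (omega : R)
  (xd : 'I_T -> 'cV[R]_n) (z : 'I_T -> 'cV[R]_NA) (v : 'I_T -> 'cV[R]_NB) :
  (1 <= n)%N -> (1 <= T)%N -> (1 <= NA + NB)%N -> 0 <= omega ->
  \rank (col_mx (datamx z) (datamx v)) = (NA + NB)%N ->
  exists (Ai : 'M[R]_(NA + NB)) (Bi : 'M[R]_(NA + NB, n)) (tau : 'I_T -> R),
    Ai^T = Ai /\
    nsd (block3
      (- 1%:M - \sum_(j < T) tau j *: c_j omega (xd j))
      (Bi^T - \sum_(j < T) tau j *: (b_j (zv (z j) (v j)) (xd j))^T)
      Bi^T
      (Bi - \sum_(j < T) tau j *: b_j (zv (z j) (v j)) (xd j))
      (Ai - \sum_(j < T) tau j *: a_j (zv (z j) (v j)))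
      0
      Bi
      0
      (- Ai)) /\
    pd Ai /\
    (forall j : 'I_T, 0 <= tau j).
Proof.
move=> _ _ _ omega_ge0 rankW.
pose w j := zv (z j) (v j).
pose t := (1 + data_bound omega xd)^-1.
have bound_ge0 := data_bound_ge0 xd omega_ge0.
have t_gt0 : 0 < t by rewrite invr_gt0; lra.
have t_le : t * data_bound omega xd <= 1 by rewrite ler_pdivrMl ?mulr1; lra.
have pdA : pd ((t / 2) *: gram w).
  by rewrite gram_datamx; apply: pdZ; [lra | apply: pd_gram; rewrite /row_free rankW].
exists ((t / 2) *: gram w), 0, (fun _ => t); split; first by case: pdA.
split; last by split=> // j; apply: ltW.
by rewrite trmx0 !sub0r; apply: nsd_certificate => //; apply: ltW.
Qed.
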